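(* Let $(V,E)$ be a finite connected bipartite graph with parts $V=V_1\cup V_2$ and positive edge weight function $m$, and let $\lambda$ be its spectral expansion. Let $U\subseteq V_1$ be non-empty, $N(U)=\{v\in V_2:\exists u\in U,\ \{u,v\}\in E\}$, $0<\delta<1$, and let $W\subseteq N(U)$ be such that for every $u\in U$, $$\frac{\sum_{v\in W,\ \{u,v\}\in E}m(\{u,v\})}{m(u)}\ge\delta.$$ Then $$\frac{m(U)}{m(W)}\le\frac{4}{3\delta}\left(\frac{2\lambda}{\sqrt{\delta}}+\frac{m(U)}{m(V_1)}\right).$$
   Context: For a weighted graph, $m(v)=\sum_{e\ni v}m(e)$ and $m(S)=\sum_{v\in S}m(v)$ for a vertex set $S$. Let $\ell^2(V)$ be the real functions on $V$ with inner product $\langle\phi,\psi\rangle=\sum_v m(v)\phi(v)\psi(v)$, and let $M$ be the random walk operator $M\phi(v)=\frac1{m(v)}\sum_{u:\{u,v\}\in E}m(\{u,v\})\phi(u)$. For a bipartite graph with parts $V_1,V_2$, the spectral expansion $\lambda$ is the largest absolute value of an eigenvalue of $M$ restricted to the orthogonal complement of $\operatorname{span}\{\mathbb{1}_{V_1},\mathbb{1}_{V_2}\}$ (equivalently, the smallest $\lambda$ with $\|M\phi\|\le\lambda\|\phi\|$ for all $\phi\perp\mathbb{1}_{V_1},\mathbb{1}_{V_2}$). *)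

From mathcomp Require Import all_boot all_order all_algebra.
From mathcomp Require Import reals.
Set Implicit Arguments. Unset Strict Implicit. Unset Printing Implicit Defensive.
Import Order.TTheory GRing.Theory Num.Theory.
Local Open Scope ring_scope.

Section Defs.
Variables (R : realType) (T : finType).

(* A weighted graph on the finite vertex type T is given by a symmetric,
   nonnegative weight function w; {x,y} is an edge iff 0 < w x y, and then
   m({x,y}) = w x y. *)
Definition edge (w : T -> T -> R) : rel T := fun x y => 0 < w x y.

Definition is_weighted_graph (w : T -> T -> R) : Prop :=
  (forall x y, w x y = w y x) /\ (forall x y, 0 <= w x y).

Definition connected_graph (w : T -> T -> R) : Prop :=
  forall x y, connect (edge w) x y.

(* bipartite with parts V1 and V2 = ~: V1: every edge joins the two parts *)
Definition bipartite_parts (w : T -> T -> R) (V1 : {set T}) : Prop :=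
  forall x y, edge w x y -> (x \in V1) != (y \in V1).

Definition mv (w : T -> T -> R) (v : T) : R := \sum_(u : T) w v u.
Definition mS (w : T -> T -> R) (S : {set T}) : R := \sum_(v in S) mv w v.

Definition inner (w : T -> T -> R) (f g : T -> R) : R :=
  \sum_(v : T) mv w v * f v * g v.
Definition l2norm (w : T -> T -> R) (f : T -> R) : R := Num.sqrt (inner w f f).

Definition walk (w : T -> T -> R) (f : T -> R) : T -> R :=
  fun v => (mv w v)^-1 * \sum_(u : T) w v u * f u.

Definition indic (A : {set T}) : T -> R := fun v => (v \in A)%:R.

Definition expansion_bound (w : T -> T -> R) (V1 : {set T}) (lam : R) : Prop :=
  forall f : T -> R,
    inner w f (indic V1) = 0 -> inner w f (indic (~: V1)) = 0 ->
    l2norm w (walk w f) <= lam * l2norm w f.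

Definition spectral_expansion (w : T -> T -> R) (V1 : {set T}) (lam : R) : Prop :=
  expansion_bound w V1 lam /\ (forall mu, expansion_bound w V1 mu -> lam <= mu).

Definition nbhd (w : T -> T -> R) (V1 U : {set T}) : {set T} :=
  [set v in ~: V1 | [exists u in U, edge w u v]].

End Defs.

From mathcomp Require Import all_boot all_order all_algebra.
From mathcomp Require Import reals.
From mathcomp Require Import ring lra.
Import Order.TTheory GRing.Theory Num.Theory.
Local Open Scope ring_scope.
Set Implicit Arguments. Unset Strict Implicit.

(* The centred indicators f = 1_U - (m(U)/m(V1)) 1_V1 and g = 1_W - (m(W)/m(V2)) 1_V2
   are orthogonal to 1_V1 and 1_V2, and <f, M g> = m(E(U,W)) - m(U) m(W) / m(V1).
   Cauchy-Schwarz and the expansion bound give the one-sided expander mixing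
   inequality m(E(U,W)) - m(U) m(W) / m(V1) <= lam sqrt(m(U) m(W)).  The degree
   hypothesis gives delta m(U) <= m(E(U,W)) <= m(W), hence sqrt(m(U) m(W)) <=
   m(W) / sqrt delta, and dividing by delta m(W) yields
   m(U)/m(W) <= (lam / sqrt delta + m(U)/m(V1)) / delta, which is stronger than
   the claim. *)

Lemma ler_sum_subset (R : numDomainType) (I : finType) (F : I -> R) (A B : {set I}) :
  (forall i, 0 <= F i) -> A \subset B -> \sum_(i in A) F i <= \sum_(i in B) F i.
Proof.
move=> F_ge0 /setIidPr BA; rewrite [X in _ <= X](big_setID A) /= BA lerDl.
exact: sumr_ge0.
Qed.

Section WeightedGraph.
Variables (R : realType) (T : finType) (w : T -> T -> R).
Hypothesis w_sym : forall x y, w x y = w y x.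
Hypothesis w_ge0 : forall x y, 0 <= w x y.

Definition mE (X Y : {set T}) : R := \sum_(x in X) \sum_(y in Y) w x y.

Definition adj_form (f g : T -> R) : R := \sum_v \sum_u f v * w v u * g u.

Definition centered (S X : {set T}) : T -> R :=
  fun v => indic R X v - mS w X / mS w S * indic R S v.

Lemma mv_ge0 v : 0 <= mv w v.
Proof. exact: sumr_ge0. Qed.

Lemma mS_ge0 (S : {set T}) : 0 <= mS w S.
Proof. by apply: sumr_ge0 => v _; apply: mv_ge0. Qed.

Lemma mE_sym (X Y : {set T}) : mE X Y = mE Y X.
Proof.
by rewrite /mE exchange_big; apply: eq_bigr => y _; apply: eq_bigr => x _; apply: w_sym.
Qed.

Lemma mv_support v (S : {set T}) :
  (forall u, u \notin S -> w v u = 0) -> \sum_(u in S) w v u = mv w v.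
Proof. by move=> wS; rewrite /mv [RHS](bigID [in S]) /= [X in _ = _ + X]big1 ?addr0. Qed.

Lemma inner_sym f g : inner w f g = inner w g f.
Proof. by apply: eq_bigr => v _; rewrite mulrAC. Qed.

Lemma innerBl f g h a :
  inner w (fun v => f v - a * g v) h = inner w f h - a * inner w g h.
Proof. by rewrite /inner mulr_sumr -sumrB; apply: eq_bigr => v _; ring. Qed.

Lemma innerBr f g h a :
  inner w h (fun v => f v - a * g v) = inner w h f - a * inner w h g.
Proof. by rewrite inner_sym innerBl !(inner_sym h). Qed.

Lemma inner_ge0 f : 0 <= inner w f f.
Proof. by apply: sumr_ge0 => v _; rewrite -mulrA mulr_ge0 ?mv_ge0 // -expr2 sqr_ge0. Qed.

Lemma inner_indic (X Y : {set T}) : inner w (indic R X) (indic R Y) = mS w (X :&: Y).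
Proof.
rewrite /inner /mS [RHS]big_mkcond; apply: eq_bigr => v _.
by rewrite /indic inE; case: (v \in X); case: (v \in Y); rewrite ?mulr1 ?mulr0.
Qed.

Lemma inner_cauchy_schwarz f g : inner w f g ^+ 2 <= inner w f f * inner w g g.
Proof.
set A := inner w f f; set B := inner w g g; set P := inner w f g.
have A_ge0 : 0 <= A := inner_ge0 f; have B_ge0 : 0 <= B := inner_ge0 g.
have quad t : 2 * t * P <= t ^+ 2 * A + B.
  have := inner_ge0 (fun v => g v - t * f v).
  by rewrite innerBl !innerBr (inner_sym g f) -/A -/B -/P; lra.
have [A0|A_gt0] := eqVneq A 0.
  have [->|P_neq0] := eqVneq P 0; first by rewrite expr0n mulr_ge0.
  have := quad ((B + 1) / P).
  by rewrite A0 mulr0 add0r -mulrA divfK //; lra.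
have A_pos : 0 < A by rewrite lt0r A_gt0.
have := quad (P / A).
have -> : 2 * (P / A) * P = 2 * (P ^+ 2 / A) by field.
have -> : (P / A) ^+ 2 * A = P ^+ 2 / A by field.
by rewrite -ler_pdivrMl //; lra.
Qed.

Lemma inner_le_l2norm f g : inner w f g <= l2norm w f * l2norm w g.
Proof.
rewrite /l2norm -sqrtrM ?inner_ge0 //; apply: le_trans (ler_norm _) _.
by rewrite -sqrtr_sqr ler_sqrt ?mulr_ge0 ?inner_ge0 // inner_cauchy_schwarz.
Qed.

Lemma inner_walk f g : inner w f (walk w g) = adj_form f g.
Proof.
rewrite /inner /walk /adj_form; apply: eq_bigr => v _.
have [mv0|mv_neq0] := eqVneq (mv w v) 0.
  rewrite mv0 !mul0r big1 // => u _.
  by rewrite (psumr_eq0P (fun u _ => w_ge0 v u) mv0) // mulr0 mul0r.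
rewrite mulrAC mulrA mulfV // mul1r mulr_suml.
by apply: eq_bigr => u _; ring.
Qed.

Lemma adj_formBl f g h a :
  adj_form (fun v => f v - a * g v) h = adj_form f h - a * adj_form g h.
Proof.
rewrite /adj_form mulr_sumr -sumrB; apply: eq_bigr => v _.
by rewrite mulr_sumr -sumrB; apply: eq_bigr => u _; ring.
Qed.

Lemma adj_formBr f g h a :
  adj_form h (fun u => f u - a * g u) = adj_form h f - a * adj_form h g.
Proof.
rewrite /adj_form mulr_sumr -sumrB; apply: eq_bigr => v _.
by rewrite mulr_sumr -sumrB; apply: eq_bigr => u _; ring.
Qed.

Lemma adj_form_indic (X Y : {set T}) : adj_form (indic R X) (indic R Y) = mE X Y.
Proof.
rewrite /adj_form /mE [RHS]big_mkcond; apply: eq_bigr => v _.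
rewrite [in RHS]big_mkcond /indic; case: (v \in X) => /=.
  by apply: eq_bigr => u _; case: (u \in Y); rewrite ?mulr1 ?mul1r ?mulr0.
by rewrite big1 // => u _; rewrite !mul0r.
Qed.

Lemma inner_centered_self (S X : {set T}) :
  X \subset S -> mS w S != 0 -> inner w (centered S X) (indic R S) = 0.
Proof. by move=> /setIidPl XS S_neq0; rewrite innerBl !inner_indic setIid XS divfK ?subrr. Qed.

Lemma inner_centered_disjoint (S S' X : {set T}) :
  X \subset S -> [disjoint S & S'] -> inner w (centered S X) (indic R S') = 0.
Proof.
move=> XS SS'; rewrite innerBl !inner_indic.
have /eqP -> : S :&: S' == set0 by rewrite setI_eq0.
have /eqP -> : X :&: S' == set0 by rewrite setI_eq0 (disjointWl XS).
by rewrite /mS big_set0 mulr0 subr0.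
Qed.

Lemma centered_norm_le (S X : {set T}) :
  X \subset S -> mS w S != 0 -> inner w (centered S X) (centered S X) <= mS w X.
Proof.
move=> XS S_neq0; rewrite {1}/centered innerBl (inner_sym (indic R S)).
rewrite inner_centered_self // mulr0 subr0 inner_sym innerBl !inner_indic.
by rewrite setIid (setIidPr XS) gerBl mulr_ge0 ?divr_ge0 ?mS_ge0.
Qed.

Variable V1 : {set T}.
Hypothesis V1_bip : bipartite_parts w V1.
Local Notation V2 := (~: V1).

Lemma w_same_part x y : (x \in V1) = (y \in V1) -> w x y = 0.
Proof.
move=> xy; have := w_ge0 x y; rewrite le_eqVlt => /orP[/eqP <- // | w_gt0].
by have := V1_bip w_gt0; rewrite xy eqxx.
Qed.

Lemma mE_V2r (X : {set T}) : X \subset V1 -> mE X V2 = mS w X.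
Proof.
move=> /subsetP XV1; apply: eq_bigr => x /XV1 xV1; apply: mv_support => y.
by rewrite inE negbK => yV1; apply: w_same_part; rewrite xV1 yV1.
Qed.

Lemma mE_V1l (Y : {set T}) : Y \subset V2 -> mE V1 Y = mS w Y.
Proof.
move=> /subsetP YV2; rewrite mE_sym; apply: eq_bigr => y /YV2.
rewrite inE => yV2; apply: mv_support => x xV2.
by apply: w_same_part; rewrite (negbTE xV2) (negbTE yV2).
Qed.

Lemma mS_V2 : mS w V2 = mS w V1.
Proof. by rewrite -mE_V1l // mE_V2r. Qed.

Lemma adj_form_centered (U W : {set T}) :
  U \subset V1 -> W \subset V2 -> mS w V1 != 0 ->
  adj_form (centered V1 U) (centered V2 W) = mE U W - mS w U * mS w W / mS w V1.
Proof.
move=> UV1 WV2 V1_neq0.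
rewrite /centered adj_formBl !adj_formBr !adj_form_indic.
rewrite (mE_V2r UV1) (mE_V1l WV2) (mE_V2r (subxx V1)) mS_V2.
by field.
Qed.

Lemma expander_mixing (lam : R) (U W : {set T}) :
  expansion_bound w V1 lam -> 0 <= lam ->
  U \subset V1 -> W \subset V2 -> mS w V1 != 0 ->
  mE U W - mS w U * mS w W / mS w V1 <= lam * Num.sqrt (mS w U * mS w W).
Proof.
move=> bound lam_ge0 UV1 WV2 V1_neq0.
have V2_neq0 : mS w V2 != 0 by rewrite mS_V2.
have g_perp1 : inner w (centered V2 W) (indic R V1) = 0.
  by apply: inner_centered_disjoint; rewrite // disjoints_subset.
have g_perp2 := inner_centered_self WV2 V2_neq0.
rewrite -adj_form_centered // -inner_walk.
apply: le_trans (inner_le_l2norm _ _) _.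
rewrite sqrtrM ?mS_ge0 // mulrCA.
apply: ler_pM; rewrite ?sqrtr_ge0 //.
  by rewrite ler_sqrt ?mS_ge0 ?centered_norm_le.
apply: le_trans (bound _ g_perp1 g_perp2) _.
by rewrite ler_wpM2l // ler_sqrt ?mS_ge0 ?centered_norm_le.
Qed.

End WeightedGraph.

Lemma spectral_expansion_ge0 (R : realType) (T : finType) (w : T -> T -> R)
    (V1 : {set T}) (lam : R) :
  spectral_expansion w V1 lam -> 0 <= lam.
Proof.
case=> bound least; rewrite leNgt; apply/negP => lam_lt0.
suff /least : expansion_bound w V1 (lam - 1) by lra.
move=> f f1 f2; have := bound f f1 f2.
have nf_ge0 : 0 <= l2norm w f := sqrtr_ge0 _.
have nMf_ge0 : 0 <= l2norm w (walk w f) := sqrtr_ge0 _.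
move=> le_lam; have nf0 : l2norm w f = 0 by apply/eqP; rewrite eq_le nf_ge0 andbT; nra.
by move: le_lam; rewrite nf0 !mulr0.
Qed.

Lemma ratio_le_of_mixing (R : rcfType) (u v E lam delta : R) :
  0 < delta -> 0 <= lam -> 0 < u -> 0 < E -> delta * u <= v ->
  delta * u - u * v / E <= lam * Num.sqrt (u * v) ->
  u / v <= 4 / (3 * delta) * (2 * lam / Num.sqrt delta + u / E).
Proof.
move=> d_gt0 lam_ge0 u_gt0 E_gt0 du_le_v mixing.
set s := Num.sqrt delta; have s_gt0 : 0 < s by rewrite sqrtr_gt0.
have delta_s : delta = s ^+ 2 by rewrite sqr_sqrtr // ltW.
have v_gt0 : 0 < v by apply: lt_le_trans du_le_v; rewrite mulr_gt0.
have sqrt_le : Num.sqrt (u * v) <= v / s.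
  have vs_ge0 : 0 <= v / s by rewrite divr_ge0 // ltW.
  rewrite -(ger0_norm vs_ge0) -sqrtr_sqr ler_sqrt ?sqr_ge0 //.
  by rewrite expr_div_n -delta_s ler_pdivlMr //; nra.
have key : delta * u <= (u / E + lam / s) * v.
  have : lam * Num.sqrt (u * v) <= lam * (v / s) by rewrite ler_wpM2l.
  have -> : (u / E + lam / s) * v = u * v / E + lam * (v / s) by field; rewrite !gt_eqF.
  lra.
have a_ge0 : 0 <= u / E * v by rewrite mulr_ge0 ?divr_ge0 // ltW.
have r_ge0 : 0 <= lam / s * v by rewrite mulr_ge0 ?divr_ge0 // ltW.
have -> : 4 / (3 * delta) * (2 * lam / s + u / E) = 4 / 3 * (2 * (lam / s) + u / E) / delta.
  by field; rewrite !gt_eqF.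
rewrite ler_pdivrMr // mulrAC ler_pdivlMr //; lra.
Qed.

Theorem lemma7p8 (R : realType) (T : finType) (w : T -> T -> R)
  (V1 : {set T}) (lam : R) (U W : {set T}) (delta : R) :
  is_weighted_graph w ->
  connected_graph w ->
  bipartite_parts w V1 ->
  spectral_expansion w V1 lam ->
  U \subset V1 -> U != set0 ->
  0 < delta -> delta < 1 ->
  W \subset nbhd w V1 U ->
  (forall u, u \in U -> delta <= (\sum_(v in W) w u v) / mv w u) ->
  mS w U / mS w W <=
    4 / (3 * delta) * (2 * lam / Num.sqrt delta + mS w U / mS w V1).
Proof.
move=> [w_sym w_ge0] _ bip /[dup] /spectral_expansion_ge0 lam_ge0 [bound _].
move=> UV1 /set0Pn [u0 u0U] d_gt0 _ WN deg_W.
have WV2 : W \subset ~: V1.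
  by apply/subsetP => x /(subsetP WN); rewrite inE => /andP[].
have mv_gt0 u : u \in U -> 0 < mv w u.
  move=> uU; rewrite lt0r mv_ge0 // andbT; apply: contraTneq (deg_W u uU) => ->.
  by rewrite invr0 mulr0 -ltNge.
have mU_gt0 : 0 < mS w U.
  by rewrite /mS (bigD1 u0) //= ltr_wpDr ?mv_gt0 ?sumr_ge0 // => v _; apply: mv_ge0.
have mE_ge : delta * mS w U <= mE w U W.
  rewrite /mS mulr_sumr; apply: ler_sum => u uU.
  by rewrite -ler_pdivlMr ?mv_gt0 // deg_W.
have mE_le : mE w U W <= mS w W.
  rewrite -(mE_V1l w_sym w_ge0 bip WV2); apply: ler_sum_subset UV1 => x.
  exact: sumr_ge0.
have mV1_gt0 : 0 < mS w V1.
  by apply: lt_le_trans mU_gt0 (ler_sum_subset (mv_ge0 w_ge0) UV1).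
apply: ratio_le_of_mixing => //; first lra.
have := expander_mixing w_sym w_ge0 bip bound lam_ge0 UV1 WV2 (lt0r_neq0 mV1_gt0).
lra.
Qed.
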